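(* Let $H:\omega\to\omega$, let $\sigma\in{}^{<\omega}\omega$ with $|\sigma|=m$, let $n\in\omega$, and let $T\subseteq{}^{<\omega}H$ be a finite tree which is $H\restriction(m+2n)$-full-branching above $\sigma$. Let $C_1,C_2$ be a partition of the set of leaves of $T$. Then at least one of the following holds: (i) the tree consisting of the nodes of $T$ comparable with some element of $C_1$ is $H\restriction(m+n)$-full-branching above $\sigma$; (ii) there exists $\tau\succ\sigma$ with $|\tau|=m+n$ such that the tree consisting of the nodes of $T$ comparable with some element of $C_2$ is $H\restriction(m+2n)$-full-branching above $\tau$.
   Context: A tree is a set of finite strings closed under prefixes; a leaf is a node with no proper extension in the tree. ${}^{<\omega}H$ is the tree of strings $\rho$ with $\rho(i)<H(i)$ for all $i<|\rho|$. For $f:\omega\to\omega$, $f<H$ means $f(i)<H(i)$ for all $i$. For a string $\sigma$ and $N>|\sigma|$, a tree $T$ is $H\restriction N$-full-branching above $\sigma$ if for every $f<H$ with $\sigma\prec f$ we have $f\restriction N\in T$. *)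

From mathcomp Require Import all_boot.
Set Implicit Arguments. Unset Strict Implicit. Unset Printing Implicit Defensive.

(* Finite strings are [seq nat]; a set of strings is a predicate [seq nat -> Prop]. *)

(* s is an initial segment of t (non-strict) : mathcomp's [prefix s t]. *)
Definition proper_prefix (s t : seq nat) : Prop := prefix s t /\ size s < size t.

Definition is_tree (T : seq nat -> Prop) : Prop :=
  forall s t, prefix s t -> T t -> T s.

Definition finite_set (T : seq nat -> Prop) : Prop :=
  exists l : seq (seq nat), forall s, T s <-> s \in l.

Definition sub_H_tree (H : nat -> nat) (T : seq nat -> Prop) : Prop :=
  forall s, T s -> forall i, i < size s -> nth 0 s i < H i.

Definition leaf (T : seq nat -> Prop) (s : seq nat) : Prop :=
  T s /\ forall t, T t -> ~ proper_prefix s t.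

Definition restr (f : nat -> nat) (N : nat) : seq nat := mkseq f N.

Definition below (f H : nat -> nat) : Prop := forall i, f i < H i.

Definition init_seg (s : seq nat) (f : nat -> nat) : Prop := restr f (size s) = s.

Definition full_branching (H : nat -> nat) (N : nat) (T : seq nat -> Prop)
  (sigma : seq nat) : Prop :=
  forall f, below f H -> init_seg sigma f -> T (restr f N).

Definition comparable_subtree (T C : seq nat -> Prop) : seq nat -> Prop :=
  fun s => T s /\ exists c, C c /\ (prefix s c \/ prefix c s).

(* Suppose (ii) fails and let f < H extend sigma.  Failure of (ii) at
   tau = f|(m+n) gives g < H extending tau whose restriction g|(m+2n), a node
   of T by full branching, is not comparable with any leaf in C2.  Extending
   it to a leaf of the finite tree T yields a leaf in C1 lying above
   g|(m+2n), hence above tau = f|(m+n). *)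

From Stdlib Require Import Classical.
From mathcomp Require Import all_boot.

Lemma prefix_restr (f : nat -> nat) (a b : nat) :
  a <= b -> prefix (restr f a) (restr f b).
Proof.
by move=> le_ab; rewrite /restr /mkseq -(subnKC le_ab) iotaD map_cat prefix_prefix.
Qed.

Lemma take_restr (f : nat -> nat) (k n : nat) :
  take k (restr f n) = restr f (minn k n).
Proof. by rewrite /restr /mkseq -map_take take_iota. Qed.

Lemma init_seg_prefix (s t : seq nat) (f : nat -> nat) :
  prefix s t -> init_seg t f -> init_seg s f.
Proof.
rewrite /init_seg => s_t t_f; have le_st := size_prefix s_t.
by move: s_t; rewrite prefixE -t_f take_restr (minn_idPl le_st) => /eqP.
Qed.

Lemma finite_set_size_bound (T : seq nat -> Prop) :
  finite_set T -> exists N, forall s, T s -> size s <= N.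
Proof.
case=> l memT; exists (\max_(t <- l) size t) => s /memT s_l.
by rewrite (big_rem s s_l) /= leq_maxl.
Qed.

Lemma exists_leaf_above (T : seq nat -> Prop) (s : seq nat) :
  finite_set T -> T s -> exists2 l, leaf T l & prefix s l.
Proof.
case/finite_set_size_bound=> N boundT.
move: {2}(N - size s) (leqnn (N - size s)) => d; elim: d s => [|d IH] s dist_s Ts.
  exists s; last exact: prefix_refl.
  split=> // t /boundT le_tN [_ lt_st].
  by move: dist_s; rewrite leqn0 subn_eq0 => /(leq_trans le_tN); rewrite leqNgt lt_st.
have [[t [Tt [s_t lt_st]]]|leaf_s] := classic (exists t, T t /\ proper_prefix s t).
  have dist_t : N - size t <= d.
    by rewrite -ltnS (leq_trans _ dist_s) // ltn_sub2l // (leq_trans lt_st) ?boundT.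
  by have [l leaf_l t_l] := IH t dist_t Tt; exists l => //; apply: prefix_trans t_l.
by exists s; [split=> // t Tt st; apply: leaf_s; exists t | exact: prefix_refl].
Qed.

Section LeafPartition.

Variables (T C1 C2 : seq nat -> Prop).
Hypothesis treeT : is_tree T.
Hypothesis finT : finite_set T.
Hypothesis leaf_C1C2 : forall s, leaf T s <-> (C1 s \/ C2 s).

Lemma comparable_C1_of_not_C2 (s t : seq nat) :
  prefix s t -> T t -> ~ comparable_subtree T C2 t -> comparable_subtree T C1 s.
Proof.
move=> s_t Tt not_C2t; have [l leaf_l t_l] := @exists_leaf_above T t finT Tt.
split; first exact: treeT s_t Tt.
exists l; split; last by left; apply: prefix_trans t_l.
case/leaf_C1C2: leaf_l => // C2l.
by case: not_C2t; split=> //; exists l; split=> //; left.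
Qed.

Lemma full_branching_leaf_dichotomy (H : nat -> nat) (sigma : seq nat) (N M : nat) :
  size sigma <= N <= M -> full_branching H M T sigma ->
  full_branching H N (comparable_subtree T C1) sigma \/
  (exists tau : seq nat, prefix sigma tau /\ size tau = N /\
     full_branching H M (comparable_subtree T C2) tau).
Proof.
case/andP=> le_sigmaN le_NM fullT.
have [|no_tau] := classic (exists tau : seq nat, prefix sigma tau /\ size tau = N /\
  full_branching H M (comparable_subtree T C2) tau); first by right.
left=> f f_H sigma_f; set tau := restr f N.
have size_tau : size tau = N by rewrite size_mkseq.
have [g [g_H [tau_g not_C2g]]] : exists g, below g H /\ init_seg tau g /\
    ~ comparable_subtree T C2 (restr g M).
  apply: NNPP => no_g; apply: no_tau; exists tau; split; last split=> //.
    by rewrite -sigma_f prefix_restr.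
  by move=> g g_H tau_g; apply: NNPP => not_C2g; apply: no_g; exists g.
have sigma_g : init_seg sigma g.
  by apply: init_seg_prefix tau_g; rewrite -sigma_f prefix_restr.
rewrite -tau_g size_tau.
exact: comparable_C1_of_not_C2 (prefix_restr g N M le_NM) (fullT g g_H sigma_g) not_C2g.
Qed.

End LeafPartition.

Theorem mainTheorem9 (H : nat -> nat) (sigma : seq nat) (m n : nat)
  (T : seq nat -> Prop) (C1 C2 : seq nat -> Prop) :
  size sigma = m ->
  is_tree T -> finite_set T -> sub_H_tree H T ->
  full_branching H (m + 2 * n) T sigma ->
  (forall s, leaf T s <-> (C1 s \/ C2 s)) ->
  (forall s, ~ (C1 s /\ C2 s)) ->
  full_branching H (m + n) (comparable_subtree T C1) sigma \/
  (exists tau : seq nat, prefix sigma tau /\ size tau = m + n /\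
     full_branching H (m + 2 * n) (comparable_subtree T C2) tau).
Proof.
move=> size_sigma treeT finT _ fullT leaf_C1C2 _.
apply: full_branching_leaf_dichotomy => //.
by rewrite size_sigma leq_addr leq_add2l leq_pmull.
Qed.
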